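(* Let $\lambda_i$ be a minuscule fundamental weight of a complex simple Lie algebra, let $u\in W^{P_i}$, and let $\alpha$ be a positive root. (I) If $\ell(s_\alpha u)=\ell(u)+1$, then $\alpha$ is a simple root and $(u(\lambda_i),\alpha^\vee)=1$. (II) If $\ell(s_\alpha u)=\ell(u)-(s-1)$, then $\alpha=\psi$ and $(u(\lambda_i),\psi^\vee)=-1$. Here the length $\ell$ is taken in $W^{P_i}$.
   Context: Simple roots $\alpha_1,\dots,\alpha_l$, Weyl group $W$ with Coxeter length $\ell$, $\alpha^\vee=2\alpha/(\alpha,\alpha)$. $\lambda_i$ minuscule: $(\lambda_i,\alpha_j^\vee)=\delta_{ij}$ and $(\lambda_i,\beta^\vee)\le1$ for all positive roots $\beta$. $W_{P_i}$ is the subgroup generated by $s_{\alpha_j}$, $j\ne i$; $W^{P_i}$ is the set of minimal length coset representatives of $W/W_{P_i}$; the length in $W^{P_i}$ of $x\in W$ is the length of the unique $u'\in W^{P_i}$ with $x\in u'W_{P_i}$. $\psi=\sum_j q_j\alpha_j$ is the highest root and $s=1+\sum_j q_j$ is the Coxeter number. *)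

From HB Require Import structures.
From mathcomp Require Import all_boot all_order all_algebra.
From mathcomp Require Import reals.
Set Implicit Arguments. Unset Strict Implicit. Unset Printing Implicit Defensive.
Import Order.TTheory GRing.Theory Num.Theory.
Local Open Scope ring_scope.

Section RootSystems.
Variables (R : realType) (l : nat).
Implicit Types (v a b : 'rV[R]_l) (M u w x y : 'M[R]_l).

Definition dot v (w : 'rV[R]_l) : R := (v *m w^T) 0 0.
(* (v, a^vee) with a^vee = 2a/(a,a). *)
Definition cop v a : R := 2 * dot v a / dot a a.
(* Reflection s_a, acting on row vectors on the right: v *m refl a = v - (v,a^vee) a.
   Convention: a matrix M represents the linear map v |-> v *m M, so the
   composite f o g of maps represented by F and G is G *m F. *)
Definition refl a : 'M[R]_l := 1%:M - (2 / dot a a) *: (a^T *m a).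

(* Reduced crystallographic root system (spanning is ensured by the base below). *)
Definition root_system (Phi : seq 'rV[R]_l) : Prop :=
  [/\ 0 \notin Phi,
      forall a b, a \in Phi -> b \in Phi -> b *m refl a \in Phi,
      forall a b, a \in Phi -> b \in Phi -> cop b a \in Num.int
    & forall a (c : R), a \in Phi -> c *: a \in Phi -> c = 1 \/ c = -1].

Definition irreducible_rs (Phi : seq 'rV[R]_l) : Prop :=
  forall P : pred 'rV[R]_l,
    (forall a b, a \in Phi -> b \in Phi -> P a -> ~~ P b -> dot a b = 0) ->
    all P Phi \/ all (predC P) Phi.

Definition nncomb (alpha : 'I_l -> 'rV[R]_l) (c : 'I_l -> nat) : 'rV[R]_l :=
  \sum_j (c j)%:R *: alpha j.

Definition is_base (Phi : seq 'rV[R]_l) (alpha : 'I_l -> 'rV[R]_l) : Prop :=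
  [/\ forall j, alpha j \in Phi,
      row_free (\matrix_j alpha j)
    & forall b, b \in Phi -> exists c, b = nncomb alpha c \/ b = - nncomb alpha c].

Definition positive_root (Phi : seq 'rV[R]_l) alpha b : Prop :=
  b \in Phi /\ exists c, b = nncomb alpha c.

Definition minuscule (Phi : seq 'rV[R]_l) alpha (i : 'I_l) (lam : 'rV[R]_l) : Prop :=
  (forall j, cop lam (alpha j) = (i == j)%:R) /\
  (forall b, positive_root Phi alpha b -> cop lam b <= 1).

Definition highest_root (Phi : seq 'rV[R]_l) alpha (psi : 'rV[R]_l) (q : 'I_l -> nat) : Prop :=
  [/\ psi \in Phi, psi = nncomb alpha q
    & forall b, positive_root Phi alpha b -> exists c, psi - b = nncomb alpha c].

Definition coxeter_number (q : 'I_l -> nat) : nat := (1 + \sum_j q j)%N.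

(* Product s_{j1} o s_{j2} o ... o s_{jk} of simple reflections of the word [:: j1; ...; jk]. *)
Definition wmat (alpha : 'I_l -> 'rV[R]_l) (ws : seq 'I_l) : 'M[R]_l :=
  foldr (fun j M => M *m refl (alpha j)) 1%:M ws.

Definition inW alpha w : Prop := exists ws, w = wmat alpha ws.

Definition inWP alpha (i : 'I_l) w : Prop :=
  exists ws, all (fun j => j != i) ws /\ w = wmat alpha ws.

Definition coxlen alpha w (k : nat) : Prop :=
  (exists ws, size ws = k /\ w = wmat alpha ws) /\
  (forall ws, w = wmat alpha ws -> (k <= size ws)%N).

(* u in W^{P_i}: u is of minimal length in its coset u W_{P_i}
   (u o y is represented by y *m u). *)
Definition minrep alpha (i : 'I_l) u : Prop :=
  inW alpha u /\
  forall y k1 k2, inWP alpha i y -> coxlen alpha u k1 -> coxlen alpha (y *m u) k2 ->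
    (k1 <= k2)%N.

(* Length in W^{P_i} of x: length of u' in W^{P_i} with x in u' W_{P_i}. *)
Definition lenP alpha (i : 'I_l) x (k : nat) : Prop :=
  exists u', [/\ minrep alpha i u', (exists y, inWP alpha i y /\ x = y *m u')
                & coxlen alpha u' k].

End RootSystems.

From HB Require Import structures.
From mathcomp Require Import all_boot all_order all_algebra.
From mathcomp Require Import reals.
From mathcomp Require Import zify ring lra.
Set Implicit Arguments. Unset Strict Implicit. Unset Printing Implicit Defensive.
Import Order.TTheory GRing.Theory Num.Theory.
Local Open Scope ring_scope.

(* Write w(v) for v *m w and put depth w := ht (lam - w(lam)).  Since lam is
   minuscule, every (w(lam), b^vee) with b a root lies in {-1, 0, 1}, so a
   simple reflection changes the depth by at most one and depth w <= l(w).
   Conversely, along any word for w one builds a word of length depth w in the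
   coset W_P w: a letter with (w(lam), alpha_j^vee) = 1 is kept, one with -1 is
   cancelled by the exchange condition, and one with 0 is absorbed into W_P,
   because a reflection fixing lam lies in W_P.  Hence the length in W^P is
   the depth, and depth (s_a u) = depth u + (u(lam), a^vee) ht a.  Both claims
   follow since 1 <= ht a <= ht psi = s - 1, with equality on the left only
   for simple roots and on the right only for psi. *)

Lemma intr_le1_cases (R : archiNumDomainType) (t : R) : t \in Num.int -> -1 <= t <= 1 ->
  t = -1 \/ t = 0 \/ t = 1.
Proof.
case/intrP=> m -> /andP[]; rewrite -(rmorph1 (intmul 1)) -rmorphN !ler_int => h1 h2.
have [->|[->|->]] : (m = -1 \/ m = 0 \/ m = 1)%R by lia.
- by left; rewrite rmorphN rmorph1.
- by right; left.
- by right; right; rewrite rmorph1.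
Qed.

Lemma intr_gt0_ge1 (R : archiNumDomainType) (t : R) : t \in Num.int -> 0 < t -> 1 <= t.
Proof. by move=> tZ t_gt0; rewrite -(gtr0_norm t_gt0) norm_intr_ge1 // gt_eqF. Qed.

Section Euclidean.
Variables (R : realType) (l : nat).
Implicit Types (v w a b : 'rV[R]_l) (M N : 'M[R]_l).

Lemma eq_mx_action M N : (forall v, v *m M = v *m N) -> M = N.
Proof. by move=> eqMN; apply/row_matrixP => k; rewrite !rowE eqMN. Qed.

Lemma dotC v w : dot v w = dot w v.
Proof. by rewrite /dot -(trmxK (w *m v^T)) trmx_mul trmxK [RHS]mxE. Qed.

Lemma dotDl v w b : dot (v + w) b = dot v b + dot w b.
Proof. by rewrite /dot mulmxDl mxE. Qed.

Lemma dotZl (c : R) v b : dot (c *: v) b = c * dot v b.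
Proof. by rewrite /dot -scalemxAl mxE. Qed.

Lemma dotNl v b : dot (- v) b = - dot v b.
Proof. by rewrite /dot mulNmx mxE. Qed.

Lemma dotBl v w b : dot (v - w) b = dot v b - dot w b.
Proof. by rewrite dotDl dotNl. Qed.

Lemma dot0l b : dot 0 b = 0.
Proof. by rewrite /dot mul0mx mxE. Qed.

Lemma dotDr v w b : dot b (v + w) = dot b v + dot b w.
Proof. by rewrite dotC dotDl !(dotC b). Qed.

Lemma dotZr (c : R) v b : dot b (c *: v) = c * dot b v.
Proof. by rewrite dotC dotZl dotC. Qed.

Lemma dotNr v b : dot b (- v) = - dot b v.
Proof. by rewrite dotC dotNl dotC. Qed.

Lemma dotBr v w b : dot b (v - w) = dot b v - dot b w.
Proof. by rewrite dotDr dotNr. Qed.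

Lemma dot0r b : dot b 0 = 0.
Proof. by rewrite dotC dot0l. Qed.

Lemma dot_sum v (I : finType) (r : I -> R) (x : I -> 'rV[R]_l) :
  dot v (\sum_k r k *: x k) = \sum_k r k * dot v (x k).
Proof.
apply: (big_ind2 (fun x y => dot v x = y)); first by rewrite dot0r.
  by move=> x1 x2 y1 y2 <- <-; rewrite dotDr.
by move=> k _; rewrite dotZr.
Qed.

Lemma dot_gt0 v : v != 0 -> 0 < dot v v.
Proof.
have sq_ge0 k : 0 <= v 0 k * v 0 k by rewrite -expr2 sqr_ge0.
have -> : dot v v = \sum_k v 0 k * v 0 k.
  by rewrite /dot mxE; apply: eq_bigr => k _; rewrite mxE.
rewrite lt_def sumr_ge0 // andbT psumr_eq0 //; apply: contra => /allP v0.
apply/eqP/rowP => k; rewrite mxE.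
by have := v0 k (mem_index_enum k); rewrite /= mulf_eq0 orbb => /eqP.
Qed.

Lemma copDl v w a : cop (v + w) a = cop v a + cop w a.
Proof. by rewrite /cop dotDl mulrDr mulrDl. Qed.

Lemma copZl (c : R) v a : cop (c *: v) a = c * cop v a.
Proof. by rewrite /cop dotZl !mulrA (mulrC 2 c). Qed.

Lemma copNl v a : cop (- v) a = - cop v a.
Proof. by rewrite /cop dotNl mulrN mulNr. Qed.

Lemma copBl v w a : cop (v - w) a = cop v a - cop w a.
Proof. by rewrite copDl copNl. Qed.

Lemma copNr v a : cop v (- a) = - cop v a.
Proof. by rewrite /cop dotNr dotNl dotNr opprK mulrN mulNr. Qed.

Lemma cop_self a : a != 0 -> cop a a = 2.
Proof. by move=> a_nz; rewrite /cop mulfK // gt_eqF // dot_gt0. Qed.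

Lemma cop_eq0 v a : a != 0 -> (cop v a = 0) <-> (dot v a = 0).
Proof.
move=> /dot_gt0 aa_gt0; rewrite /cop.
split=> [/eqP|->]; last by rewrite mulr0 mul0r.
by rewrite !mulf_eq0 invr_eq0 (gt_eqF aa_gt0) orbF pnatr_eq0 => /eqP.
Qed.

Lemma cop_gt0 v a : a != 0 -> (0 < cop v a) = (0 < dot v a).
Proof. by move=> /dot_gt0 aa_gt0; rewrite /cop pmulr_lgt0 ?invr_gt0 // pmulr_rgt0. Qed.

Lemma reflE v a : v *m refl a = v - cop v a *: a.
Proof.
rewrite /refl mulmxBr mulmx1 -scalemxAr mulmxA (mx11_scalar (v *m a^T)).
by rewrite mul_scalar_mx scalerA /cop /dot mulrAC mulrC.
Qed.

Lemma reflK a v : a != 0 -> v *m refl a *m refl a = v.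
Proof.
move=> a_nz; rewrite !reflE copBl copZl cop_self //.
by apply/rowP => k; rewrite !mxE; lra.
Qed.

Lemma reflN a : refl (- a) = refl a.
Proof.
apply: eq_mx_action => v; rewrite !reflE copNr.
by rewrite scaleNr scalerN opprK.
Qed.

Lemma dot_refl v w a : dot (v *m refl a) w = dot v (w *m refl a).
Proof.
rewrite !reflE dotBl dotBr dotZl dotZr /cop (dotC w a) (dotC a w).
by ring.
Qed.

Lemma refl_conj a b : a != 0 -> refl (b *m refl a) = refl a *m refl b *m refl a.
Proof.
move=> a_nz; apply: eq_mx_action => v.
rewrite !mulmxA (reflE (v *m refl a) b) mulmxBl -scalemxAl reflK // reflE.
by rewrite /cop dot_refl reflK // dot_refl.
Qed.

End Euclidean.

Section Words.
Variables (R : realType) (l : nat) (alpha : 'I_l -> 'rV[R]_l).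
Implicit Types (v w b : 'rV[R]_l) (ws : seq 'I_l).

Lemma wmat_cons j ws : wmat alpha (j :: ws) = wmat alpha ws *m refl (alpha j).
Proof. by []. Qed.

Lemma wmat_cat ws1 ws2 : wmat alpha (ws1 ++ ws2) = wmat alpha ws2 *m wmat alpha ws1.
Proof.
elim: ws1 => [|j ws1 IH]; first by rewrite /wmat /= mulmx1.
by rewrite cat_cons !wmat_cons IH mulmxA.
Qed.

Lemma wmat_rev_cons j ws :
  wmat alpha (rev (j :: ws)) = refl (alpha j) *m wmat alpha (rev ws).
Proof. by rewrite rev_cons -cats1 wmat_cat /wmat /= mul1mx. Qed.

Lemma coxlen_exists ws : exists2 k, coxlen alpha (wmat alpha ws) k & (k <= size ws)%N.
Proof.
pose P n := [exists t : n.-tuple 'I_l, wmat alpha t == wmat alpha ws].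
have P_ws : P (size ws) by apply/existsP; exists (in_tuple ws).
have [k /existsP[t /eqP Et] k_min] := ex_minnP (ex_intro P _ P_ws).
exists k; last exact: k_min.
split; first by exists t; rewrite size_tuple Et.
by move=> ws' E; apply: k_min; apply/existsP; exists (in_tuple ws'); rewrite -E.
Qed.

Lemma inWP_mul i y1 y2 : inWP alpha i y1 -> inWP alpha i y2 -> inWP alpha i (y1 *m y2).
Proof.
move=> [ws1 [ws1_i ->]] [ws2 [ws2_i ->]].
by exists (ws2 ++ ws1); rewrite all_cat ws1_i ws2_i wmat_cat.
Qed.

Hypothesis alpha_nz : forall j, alpha j != 0.

Lemma wmatK v ws : v *m wmat alpha ws *m wmat alpha (rev ws) = v.
Proof.
elim: ws v => [|j ws IH] v; first by rewrite /wmat /= !mulmx1.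
by rewrite wmat_cons wmat_rev_cons !mulmxA reflK.
Qed.

Lemma wmatKV v ws : v *m wmat alpha (rev ws) *m wmat alpha ws = v.
Proof. by rewrite -{2}(revK ws) wmatK. Qed.

Lemma dot_wmat v w ws : dot (v *m wmat alpha ws) w = dot v (w *m wmat alpha (rev ws)).
Proof.
elim: ws v w => [|j ws IH] v w; first by rewrite /wmat /= !mulmx1.
by rewrite wmat_cons wmat_rev_cons mulmxA dot_refl IH mulmxA.
Qed.

Lemma cop_wmat v w ws : cop (v *m wmat alpha ws) (w *m wmat alpha ws) = cop v w.
Proof. by rewrite /cop !dot_wmat !wmatK. Qed.

Lemma refl_wmat b ws :
  refl (b *m wmat alpha (rev ws)) = wmat alpha ws *m refl b *m wmat alpha (rev ws).
Proof.
elim: ws b => [|j ws IH] b; first by rewrite /wmat /= !mulmx1 mul1mx.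
by rewrite wmat_rev_cons mulmxA IH refl_conj // wmat_cons !mulmxA.
Qed.

End Words.

Section RootSystem.
Variables (R : realType) (l : nat) (Phi : seq 'rV[R]_l) (alpha : 'I_l -> 'rV[R]_l).
Hypotheses (Phi_rs : root_system Phi) (alpha_base : is_base Phi alpha).
Implicit Types (v w b : 'rV[R]_l) (ws : seq 'I_l).

Lemma root_nz b : b \in Phi -> b != 0.
Proof. by case: Phi_rs => Phi_0 _ _ _ bPhi; apply: contraNneq Phi_0 => <-. Qed.

Lemma root_refl a b : a \in Phi -> b \in Phi -> b *m refl a \in Phi.
Proof. by case: Phi_rs => _ reflP _ _; apply: reflP. Qed.

Lemma cop_root_int a b : a \in Phi -> b \in Phi -> cop b a \in Num.int.
Proof. by case: Phi_rs => _ _ intP _; apply: intP. Qed.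

Lemma root_reduced a (c : R) : a \in Phi -> c *: a \in Phi -> c = 1 \/ c = -1.
Proof. by case: Phi_rs => _ _ _ redP; apply: redP. Qed.

Lemma rootN b : b \in Phi -> - b \in Phi.
Proof.
move=> bPhi; have -> : - b = b *m refl b.
  by rewrite reflE cop_self ?root_nz // scaler_nat; apply/rowP => k; rewrite !mxE; lra.
exact: root_refl.
Qed.

Lemma simple_root j : alpha j \in Phi.
Proof. by case: alpha_base. Qed.

Lemma simple_root_nz j : alpha j != 0.
Proof. exact: root_nz (simple_root j). Qed.

Lemma root_wmat b ws : b \in Phi -> b *m wmat alpha ws \in Phi.
Proof.
elim: ws b => [|j ws IH] b bPhi; first by rewrite /wmat /= mulmx1.
by rewrite wmat_cons mulmxA root_refl ?simple_root ?IH.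
Qed.

Definition base_mx : 'M[R]_l := \matrix_j alpha j.

Lemma base_mx_unit : base_mx \in unitmx.
Proof. by case: alpha_base => _ free _; rewrite -row_free_unit. Qed.

Definition scoord v (j : 'I_l) : R := (v *m invmx base_mx) 0 j.

Lemma scoordD v w j : scoord (v + w) j = scoord v j + scoord w j.
Proof. by rewrite /scoord mulmxDl mxE. Qed.

Lemma scoordZ (c : R) v j : scoord (c *: v) j = c * scoord v j.
Proof. by rewrite /scoord -scalemxAl mxE. Qed.

Lemma scoordN v j : scoord (- v) j = - scoord v j.
Proof. by rewrite /scoord mulNmx mxE. Qed.

Lemma scoordB v w j : scoord (v - w) j = scoord v j - scoord w j.
Proof. by rewrite scoordD scoordN. Qed.

Lemma scoord0 j : scoord 0 j = 0.
Proof. by rewrite /scoord mul0mx mxE. Qed.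

Lemma scoord_sum (r : 'I_l -> R) j : scoord (\sum_k r k *: alpha k) j = r j.
Proof.
have -> : \sum_k r k *: alpha k = \row_k r k *m base_mx.
  by rewrite mulmx_sum_row; apply: eq_bigr => k _; rewrite rowK mxE.
by rewrite /scoord mulmxK ?base_mx_unit // mxE.
Qed.

Lemma scoord_nncomb c j : scoord (nncomb alpha c) j = (c j)%:R.
Proof. exact: scoord_sum. Qed.

Lemma scoord_inj v w : (forall j, scoord v j = scoord w j) -> v = w.
Proof.
move=> eq_vw; rewrite -(mulmxKV base_mx_unit v) -(mulmxKV base_mx_unit w).
by congr (_ *m _); apply/rowP => j; apply: eq_vw.
Qed.

Lemma scoordK v : \sum_j scoord v j *: alpha j = v.
Proof. by apply: scoord_inj => j; rewrite scoord_sum. Qed.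

Lemma scoord_simple k j : scoord (alpha k) j = (j == k)%:R.
Proof.
rewrite -(scoord_sum (fun m => (m == k)%:R)); congr scoord.
rewrite (bigD1 k) //= eqxx scale1r big1 ?addr0 // => m /negbTE->.
by rewrite scale0r.
Qed.

Definition ht v : R := \sum_j scoord v j.

Lemma htD v w : ht (v + w) = ht v + ht w.
Proof. by rewrite /ht -big_split; apply: eq_bigr => j _; rewrite scoordD. Qed.

Lemma htZ (c : R) v : ht (c *: v) = c * ht v.
Proof. by rewrite /ht mulr_sumr; apply: eq_bigr => j _; rewrite scoordZ. Qed.

Lemma htB v w : ht (v - w) = ht v - ht w.
Proof. by rewrite htD -scaleN1r htZ mulN1r. Qed.

Lemma ht_nncomb c : ht (nncomb alpha c) = (\sum_j c j)%:R.
Proof. by rewrite natr_sum; apply: eq_bigr => j _; rewrite scoord_nncomb. Qed.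

Lemma ht_simple k : ht (alpha k) = 1.
Proof.
rewrite /ht (bigD1 k) //= scoord_simple eqxx big1 ?addr0 // => m /negbTE m_k.
by rewrite scoord_simple m_k.
Qed.

Definition poscomb b := exists c, b = nncomb alpha c.

Lemma poscomb_simple j : poscomb (alpha j).
Proof.
exists (fun m => (m == j : nat)); apply: scoord_inj => m.
by rewrite scoord_nncomb scoord_simple; case: (m == j).
Qed.

Lemma root_poscomb b : b \in Phi -> poscomb b \/ poscomb (- b).
Proof.
case: alpha_base => _ _ sign /sign [c [->|->]]; first by left; exists c.
by right; exists c; rewrite opprK.
Qed.

Lemma poscomb_scoord_ge0 b j : poscomb b -> 0 <= scoord b j.
Proof. by case=> c ->; rewrite scoord_nncomb ler0n. Qed.

Lemma root_poscombN b : b \in Phi -> poscomb b -> ~ poscomb (- b).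
Proof.
move=> bPhi b_pos bN_pos; apply/negP: (root_nz bPhi); rewrite negbK; apply/eqP.
apply: scoord_inj => j; rewrite scoord0.
have := poscomb_scoord_ge0 j b_pos; have := poscomb_scoord_ge0 j bN_pos.
by rewrite scoordN; lra.
Qed.

Lemma ht_root_ge1 b : b \in Phi -> poscomb b -> 1 <= ht b.
Proof.
move=> bPhi [c Ec]; rewrite Ec ht_nncomb ler1n lt0n.
apply: contra (root_nz bPhi); rewrite sum_nat_eq0 => /forallP c0.
rewrite Ec; apply/eqP; apply: scoord_inj => j.
by rewrite scoord0 scoord_nncomb (eqP (c0 j)).
Qed.

Lemma scoord_refl_simple b k j :
  scoord (b *m refl (alpha k)) j = scoord b j - cop b (alpha k) * (j == k)%:R.
Proof. by rewrite reflE scoordB scoordZ scoord_simple. Qed.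

Lemma ht_refl_simple b k : ht (b *m refl (alpha k)) = ht b - cop b (alpha k).
Proof. by rewrite reflE htB htZ ht_simple mulr1. Qed.

Lemma poscomb_refl_simple b k : b \in Phi -> poscomb b -> b != alpha k ->
  poscomb (b *m refl (alpha k)).
Proof.
move=> bPhi b_pos b_k; have [//|bk_neg] := root_poscomb (root_refl (simple_root k) bPhi).
exfalso; have b_supp m : m != k -> scoord b m = 0.
  move=> m_k; have := poscomb_scoord_ge0 m b_pos; have := poscomb_scoord_ge0 m bk_neg.
  by rewrite scoordN scoord_refl_simple (negbTE m_k) mulr0 subr0; lra.
have Eb : b = scoord b k *: alpha k.
  apply: scoord_inj => m; rewrite scoordZ scoord_simple.
  by have [->|m_k] := eqVneq m k; rewrite ?mulr1 // b_supp // mulr0.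
case: (root_reduced (simple_root k) (c := scoord b k)) => [|bk1|bkN1].
- by rewrite -Eb.
- by move: b_k; rewrite Eb bk1 scale1r eqxx.
- by have := poscomb_scoord_ge0 k b_pos; rewrite bkN1; lra.
Qed.

Lemma root_dot_simple_gt0 b : b \in Phi -> poscomb b ->
  exists m, 0 < scoord b m /\ 0 < dot b (alpha m).
Proof.
move=> bPhi b_pos.
have [m /= m_gt0 | no_m] := pickP (fun m => 0 < scoord b m * dot b (alpha m)).
  exists m; have := poscomb_scoord_ge0 m b_pos.
  by rewrite le_eqVlt => /orP[/eqP b_m|]; [rewrite -b_m mul0r ltxx in m_gt0|nra].
have : dot b b <= 0.
  rewrite -{2}(scoordK b) dot_sum; apply: sumr_le0 => j _.
  by rewrite leNgt no_m.
by have := dot_gt0 (root_nz bPhi); lra.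
Qed.

(* Induction on the height: s_m with (b, alpha_m) > 0 lowers it by at least
   one and keeps the support of b inside J. *)
Lemma root_conj_simple_in (J : pred 'I_l) b : b \in Phi -> poscomb b ->
  (forall m, ~~ J m -> scoord b m = 0) ->
  exists j ws, [/\ J j, all J ws & b = alpha j *m wmat alpha ws].
Proof.
move=> bPhi b_pos; have [c Ec] := b_pos.
have : ht b <= (\sum_j c j)%:R by rewrite Ec ht_nncomb.
elim: (\sum_j c j) b bPhi b_pos {Ec} => [|N IH] b bPhi b_pos ht_b b_J.
  by have := ht_root_ge1 bPhi b_pos; lra.
have [m [b_m_gt0 bm_gt0]] := root_dot_simple_gt0 bPhi b_pos.
have Jm : J m by apply/negPn/negP => /b_J b_m0; rewrite b_m0 ltxx in b_m_gt0.
have [->|b_m] := eqVneq b (alpha m); first by exists m, [::]; rewrite /wmat /= mulmx1.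
set b' := b *m refl (alpha m).
have cop_ge1 : 1 <= cop b (alpha m).
  by rewrite intr_gt0_ge1 ?cop_root_int ?simple_root // cop_gt0 ?simple_root_nz.
have ht_b' : ht b' <= N%:R by move: ht_b; rewrite ht_refl_simple -natr1; lra.
have b'_J p : ~~ J p -> scoord b' p = 0.
  move=> Jp; rewrite scoord_refl_simple b_J // (_ : (p == m) = false) ?mulr0 ?subr0 //.
  by apply: contraNF Jp => /eqP->.
have [j [ws [Jj Jws Eb']]] := IH b' (root_refl (simple_root m) bPhi)
  (poscomb_refl_simple bPhi b_pos b_m) ht_b' b'_J.
exists j, (m :: ws); split; rewrite /= ?Jm //.
by rewrite mulmxA -Eb' reflK ?simple_root_nz.
Qed.

Lemma root_conj_simple b : b \in Phi -> poscomb b ->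
  exists j ws, b = alpha j *m wmat alpha ws.
Proof.
move=> bPhi b_pos; have [//|j [ws [_ _ ->]]] := @root_conj_simple_in predT _ bPhi b_pos.
by exists j, ws.
Qed.

Lemma refl_root_wmat (J : pred 'I_l) b : b \in Phi ->
  (forall m, ~~ J m -> scoord b m = 0) -> exists2 ws, all J ws & refl b = wmat alpha ws.
Proof.
wlog b_pos : b / poscomb b => [wlog_pos bPhi b_J|bPhi b_J].
  have [b_pos|bN_pos] := root_poscomb bPhi; first exact: wlog_pos.
  rewrite -reflN; apply: wlog_pos; rewrite ?rootN // => m /b_J.
  by rewrite scoordN => ->; rewrite oppr0.
have [j [ws [Jj Jws ->]]] := root_conj_simple_in bPhi b_pos b_J.
exists (ws ++ j :: rev ws); first by rewrite all_cat /= all_rev Jws Jj.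
by rewrite -{1}(revK ws) refl_wmat ?revK ?wmat_cat //; apply: simple_root_nz.
Qed.

(* wmat alpha (rev ws) is the inverse of w := wmat alpha ws, so the hypothesis
   says that w^-1 maps b to a negative root. *)
Lemma exchange_condition ws b : b \in Phi -> poscomb b ->
  poscomb (- (b *m wmat alpha (rev ws))) ->
  exists2 ws', (size ws').+1 = size ws & wmat alpha ws *m refl b = wmat alpha ws'.
Proof.
elim: ws b => [|k ws IH] b bPhi b_pos.
  by rewrite /wmat /= mulmx1 => /(root_poscombN bPhi b_pos).
have [-> _|b_k] := eqVneq b (alpha k).
  exists ws => //; apply: eq_mx_action => v.
  by rewrite wmat_cons !mulmxA reflK ?simple_root_nz.
rewrite wmat_rev_cons mulmxA => bk_neg.
have [ws' size_ws' Ews'] := IH _ (root_refl (simple_root k) bPhi)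
  (poscomb_refl_simple bPhi b_pos b_k) bk_neg.
exists (k :: ws'); first by rewrite /= size_ws'.
rewrite !wmat_cons -Ews' refl_conj ?simple_root_nz //; apply: eq_mx_action => v.
by rewrite !mulmxA reflK ?simple_root_nz.
Qed.

Lemma poscomb_ht1 b : poscomb b -> ht b = 1 -> exists j, b = alpha j.
Proof.
case=> c ->; rewrite ht_nncomb natr_sum => /(natr_sum_eq1 (fun j _ => natr_nat _ _)).
case=> j [_ cj1 c_j]; exists j; apply: scoord_inj => m.
rewrite scoord_nncomb scoord_simple.
by have [->|m_j] := eqVneq m j; [rewrite cj1 | rewrite c_j].
Qed.

Section HighestRoot.
Variables (psi : 'rV[R]_l) (q : 'I_l -> nat).
Hypothesis psi_highest : highest_root Phi alpha psi q.

Lemma ht_highest_root : ht psi = (coxeter_number q - 1)%:R.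
Proof. by case: psi_highest => _ -> _; rewrite ht_nncomb /coxeter_number add1n subn1. Qed.

Lemma ht_le_highest_root b : positive_root Phi alpha b -> ht b <= ht psi.
Proof.
case: psi_highest => _ _ /[apply] -[c] Ec.
by rewrite -subr_ge0 -htB Ec ht_nncomb ler0n.
Qed.

Lemma highest_root_ht_eq b : positive_root Phi alpha b -> ht b = ht psi -> b = psi.
Proof.
case: psi_highest => _ _ /[apply] -[c] Ec ht_eq.
have : (\sum_j c j == 0)%N by rewrite -(eqr_nat R) -ht_nncomb -Ec htB ht_eq subrr.
rewrite sum_nat_eq0 => /forallP c0; apply/eqP; rewrite eq_sym -subr_eq0 Ec.
by apply/eqP/big1 => j _; rewrite (eqP (c0 j)) scale0r.
Qed.

End HighestRoot.

End RootSystem.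

Section Minuscule.
Variables (R : realType) (l : nat) (Phi : seq 'rV[R]_l) (alpha : 'I_l -> 'rV[R]_l).
Variables (i : 'I_l) (lam : 'rV[R]_l).
Hypotheses (Phi_rs : root_system Phi) (alpha_base : is_base Phi alpha).
Hypothesis lam_minuscule : minuscule Phi alpha i lam.
Implicit Types (b : 'rV[R]_l) (x y : 'M[R]_l) (ws : seq 'I_l).

Let alpha_nz := simple_root_nz Phi_rs alpha_base.

Lemma cop_lam_simple j : cop lam (alpha j) = (i == j)%:R.
Proof. by case: lam_minuscule => simpleP _; apply: simpleP. Qed.

Lemma dot_lam_simple_ge0 j : 0 <= dot lam (alpha j).
Proof.
have [<-|j_i] := eqVneq i j.
  by rewrite ltW // -cop_gt0 // cop_lam_simple eqxx ltr01.
by rewrite (proj1 (cop_eq0 _ (alpha_nz j))) // cop_lam_simple (negbTE j_i).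
Qed.

Lemma cop_lam_poscomb_ge0 b : b \in Phi -> poscomb alpha b -> 0 <= cop lam b.
Proof.
move=> bPhi [c Eb]; have bb_gt0 := dot_gt0 (root_nz Phi_rs bPhi).
rewrite /cop mulr_ge0 ?invr_ge0 ?(ltW bb_gt0) // mulr_ge0 // Eb dot_sum.
rewrite sumr_ge0 // => j _.
by rewrite mulr_ge0 ?ler0n ?dot_lam_simple_ge0.
Qed.

Lemma cop_lam_root_bound b : b \in Phi -> -1 <= cop lam b <= 1.
Proof.
have ge0_le1 b' : b' \in Phi -> poscomb alpha b' -> 0 <= cop lam b' <= 1.
  move=> b'Phi b'_pos; rewrite cop_lam_poscomb_ge0 //.
  by case: lam_minuscule => _; apply; split => //; case: b'_pos => c ->; exists c.
move=> bPhi; have [/(ge0_le1 _ bPhi)|bN_pos] := root_poscomb alpha_base bPhi.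
  by case/andP=> h0 h1; apply/andP; split; lra.
have /andP[] := ge0_le1 _ (rootN Phi_rs bPhi) bN_pos.
by rewrite copNr => h0 h1; apply/andP; split; lra.
Qed.

Lemma cop_orbit_simple_int ws j : cop (lam *m wmat alpha ws) (alpha j) \in Num.int.
Proof.
elim: ws j => [|k ws IH] j; first by rewrite /wmat /= mulmx1 cop_lam_simple natr_int.
rewrite wmat_cons mulmxA reflE copBl copZl.
by rewrite rpredB ?IH // rpredM ?IH // (cop_root_int Phi_rs) ?simple_root.
Qed.

Lemma cop_lam_root_int b : b \in Phi -> cop lam b \in Num.int.
Proof.
wlog b_pos : b / poscomb alpha b => [wlog_pos bPhi|bPhi].
  have [b_pos|bN_pos] := root_poscomb alpha_base bPhi; first exact: wlog_pos.
  by rewrite -(opprK b) copNr rpredN wlog_pos ?rootN.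
have [j [ws ->]] := root_conj_simple Phi_rs alpha_base bPhi b_pos.
by rewrite -(wmatKV alpha_nz lam ws) cop_wmat ?cop_orbit_simple_int.
Qed.

Lemma cop_orbit_cases ws b : b \in Phi ->
  let t := cop (lam *m wmat alpha ws) b in t = -1 \/ t = 0 \/ t = 1.
Proof.
move=> bPhi; have bwPhi := root_wmat Phi_rs alpha_base (rev ws) bPhi.
rewrite /= -(cop_wmat alpha_nz _ _ (rev ws)) wmatK //.
by apply: intr_le1_cases; rewrite ?cop_lam_root_int ?cop_lam_root_bound.
Qed.

Lemma inWP_fix_lam y : inWP alpha i y -> lam *m y = lam.
Proof.
case=> ws [+ ->]; elim: ws => [|k ws IH]; first by rewrite /wmat /= mulmx1.
case/andP=> k_i ws_i; rewrite wmat_cons mulmxA IH // reflE cop_lam_simple.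
by rewrite eq_sym (negbTE k_i) scale0r subr0.
Qed.

Lemma refl_inWP b : b \in Phi -> dot lam b = 0 -> inWP alpha i (refl b).
Proof.
move=> bPhi lam_b.
have b_i : scoord alpha b i = 0.
  move: lam_b; rewrite -{1}(scoordK alpha_base b) dot_sum (bigD1 i) //= big1 ?addr0.
    have lam_i_gt0 : 0 < dot lam (alpha i).
      by rewrite -cop_gt0 // cop_lam_simple eqxx ltr01.
    by move/eqP; rewrite mulf_eq0 (gt_eqF lam_i_gt0) orbF => /eqP.
  move=> j j_i; rewrite (proj1 (cop_eq0 _ (alpha_nz j))) ?mulr0 //.
  by rewrite cop_lam_simple eq_sym (negbTE j_i).
have [|ws ws_i ->] := refl_root_wmat Phi_rs alpha_base (J := fun j => j != i) bPhi.
  by move=> m; rewrite negbK => /eqP->.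
by exists ws.
Qed.

Definition depth x : R := ht alpha (lam - lam *m x).

Lemma depth_mulr_refl x b : depth (x *m refl b) = depth x + cop (lam *m x) b * ht alpha b.
Proof.
rewrite /depth mulmxA reflE -htZ // -htD //; congr ht.
by apply/rowP => k; rewrite !mxE; lra.
Qed.

Lemma depth_cons ws j :
  depth (wmat alpha (j :: ws)) = depth (wmat alpha ws) + cop (lam *m wmat alpha ws) (alpha j).
Proof. by rewrite wmat_cons depth_mulr_refl (ht_simple alpha_base) mulr1. Qed.

Lemma depth_le_size ws : depth (wmat alpha ws) <= (size ws)%:R.
Proof.
elim: ws => [|j ws IH].
  by rewrite /depth /wmat /= mulmx1 subrr /ht big1 // => j _; rewrite scoord0.
rewrite depth_cons /= -natr1.
by case: (cop_orbit_cases ws (simple_root alpha_base j)) => [->|[->|->]]; lra.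
Qed.

Lemma depth_inWP y x : inWP alpha i y -> depth (y *m x) = depth x.
Proof. by move=> y_WP; rewrite /depth mulmxA inWP_fix_lam. Qed.

Lemma reduced_word_step ws j : exists y ws', [/\ inWP alpha i y,
  y *m (wmat alpha ws *m refl (alpha j)) = wmat alpha ws'
  & (size ws')%:R = (size ws)%:R + cop (lam *m wmat alpha ws) (alpha j)].
Proof.
have jPhi := simple_root alpha_base j.
set g := alpha j *m wmat alpha (rev ws).
have gPhi : g \in Phi by apply: root_wmat.
have lam_g : cop lam g = cop (lam *m wmat alpha ws) (alpha j).
  by rewrite -[RHS](cop_wmat alpha_nz _ _ (rev ws)) wmatK.
have inWP1 : inWP alpha i 1%:M by exists [::].
case: (cop_orbit_cases ws jPhi) => [t_N1|[t0|t1]]; rewrite ?t_N1 ?t0 ?t1.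
- have gN_pos : poscomb alpha (- g).
    have [g_pos|//] := root_poscomb alpha_base gPhi.
    by have := cop_lam_poscomb_ge0 gPhi g_pos; rewrite lam_g t_N1; lra.
  have [ws' size_ws' ->] :=
    exchange_condition Phi_rs alpha_base jPhi (poscomb_simple alpha_base j) gN_pos.
  by exists 1%:M, ws'; rewrite mul1mx -size_ws' -natr1; split => //; lra.
- have lam_g0 : dot lam g = 0 by apply/(cop_eq0 _ (root_nz Phi_rs gPhi)); rewrite lam_g.
  exists (refl g), ws; split; rewrite ?addr0 //; first exact: refl_inWP.
  rewrite refl_wmat //; apply: eq_mx_action => v.
  by rewrite !mulmxA wmatKV // reflK.
- by exists 1%:M, (j :: ws); rewrite mul1mx -natr1.
Qed.

Lemma depth_attained ws : exists y ws', [/\ inWP alpha i y,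
  y *m wmat alpha ws = wmat alpha ws' & (size ws')%:R = depth (wmat alpha ws)].
Proof.
elim: ws => [|j ws [y [ws' [y_WP Ews' size_ws']]]].
  exists 1%:M, [::]; rewrite mul1mx; split => //; first by exists [::].
  by rewrite /depth /wmat /= mulmx1 subrr /ht big1 // => k _; rewrite scoord0.
have [y' [ws'' [y'_WP Ews'' size_ws'']]] := reduced_word_step ws' j.
have lam_ws' : lam *m wmat alpha ws' = lam *m wmat alpha ws.
  by rewrite -Ews' mulmxA inWP_fix_lam.
exists (y' *m y), ws''; split; first exact: inWP_mul.
  by rewrite wmat_cons -Ews'' -Ews' !mulmxA.
by rewrite size_ws'' depth_cons size_ws' lam_ws'.
Qed.

Lemma lenP_depth x k : lenP alpha i x k -> k%:R = depth x.
Proof.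
case=> u [[[ws Eu] u_min] [y [y_WP ->]] u_len]; rewrite depth_inWP //.
have [y' [ws' [y'_WP Ews' size_ws']]] := depth_attained ws.
have [k' k'_len k'_le] := coxlen_exists alpha ws'.
have k_le : (k <= k')%N by apply: (u_min y'); rewrite // Eu Ews'.
apply/eqP; rewrite eq_le; apply/andP; split.
  by rewrite Eu -size_ws' ler_nat (leq_trans k_le).
by case: u_len => -[ws1 [<- ->]] _; apply: depth_le_size.
Qed.

End Minuscule.

Theorem proposition17 (R : realType) (l : nat) (Phi : seq 'rV[R]_l)
    (alpha : 'I_l -> 'rV[R]_l) (i : 'I_l) (lam : 'rV[R]_l)
    (psi : 'rV[R]_l) (q : 'I_l -> nat) (u : 'M[R]_l) (a : 'rV[R]_l) :
  root_system Phi -> irreducible_rs Phi -> is_base Phi alpha ->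
  minuscule Phi alpha i lam -> highest_root Phi alpha psi q ->
  minrep alpha i u -> positive_root Phi alpha a ->
  (forall k k', lenP alpha i u k -> lenP alpha i (u *m refl a) k' ->
     k' = k.+1 ->
     (exists j, a = alpha j) /\ cop (lam *m u) a = 1) /\
  (forall k k', lenP alpha i u k -> lenP alpha i (u *m refl a) k' ->
     k = (k' + (coxeter_number q - 1))%N ->
     a = psi /\ cop (lam *m u) psi = -1).
Proof.
move=> Phi_rs _ alpha_base lam_min psi_highest [[ws Eu] _] a_pos.
have [aPhi a_poscomb] := a_pos.
set t := cop (lam *m u) a.
have t_cases : t = -1 \/ t = 0 \/ t = 1.
  by rewrite /t Eu; exact: (cop_orbit_cases Phi_rs alpha_base lam_min ws aPhi).
have len_step k k' : lenP alpha i u k -> lenP alpha i (u *m refl a) k' ->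
    k'%:R = k%:R + t * ht alpha a :> R.
  move=> /(lenP_depth Phi_rs alpha_base lam_min) -> /(lenP_depth Phi_rs alpha_base lam_min) ->.
  exact: depth_mulr_refl.
have ht_a_ge1 := ht_root_ge1 Phi_rs alpha_base aPhi a_poscomb.
have ht_a_le := ht_le_highest_root alpha_base psi_highest a_pos.
split=> k k' len_u len_ua Ek; have := len_step _ _ len_u len_ua; rewrite Ek.
- rewrite -natr1 => Ek'.
  have t1 : t = 1 by case: t_cases => [|[|]] tv //; rewrite tv in Ek'; lra.
  split => //; apply: (poscomb_ht1 alpha_base a_poscomb).
  by rewrite t1 in Ek'; lra.
- rewrite natrD -(ht_highest_root alpha_base psi_highest) => Ek'.
  have tN1 : t = -1 by case: t_cases => [|[|]] tv //; rewrite tv in Ek'; lra.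
  have a_psi : a = psi.
    by apply: (highest_root_ht_eq alpha_base psi_highest a_pos); rewrite tN1 in Ek'; lra.
  by split => //; rewrite -a_psi.
Qed.
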